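(* Let $\theta\in(\pi,2\pi)$. Then for all $x,y\in S_\theta$, $s_{S_\theta}(x,y)\le 2\sin(\theta/4)\, j^*_{S_\theta}(x,y)$, and the constant $2\sin(\theta/4)$ is sharp.
   Context: $S_\theta=\{x\in\mathbb{C}:0<\arg(x)<\theta\}$. For a domain $G\subsetneq\mathbb{C}$, $d_G(x)=\inf\{|x-z|:z\in\partial G\}$, $s_G(x,y)=\frac{|x-y|}{\inf_{z\in\partial G}(|x-z|+|z-y|)}$, and $j^*_G(x,y)=\frac{|x-y|}{|x-y|+2\min\{d_G(x),d_G(y)\}}$. *)

From Stdlib Require Import Reals.
From Coquelicot Require Import Coquelicot.
Open Scope R_scope.

(* S_theta = { x in C : 0 < arg x < theta }, with arg taking values in [0, 2*pi):
   x = r e^{it} with r > 0 and 0 < t < theta. *)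
Definition sector (theta : R) (x : C) : Prop :=
  exists r t : R, 0 < r /\ 0 < t < theta /\ x = (r * cos t, r * sin t)%R.

Definition boundary (G : C -> Prop) (z : C) : Prop :=
  forall e : R, 0 < e ->
    (exists w, G w /\ Cmod (z - w) < e) /\ (exists w, ~ G w /\ Cmod (z - w) < e).

Definition dG (G : C -> Prop) (x : C) : R :=
  real (Glb_Rbar (fun r => exists z, boundary G z /\ r = Cmod (x - z))).

Definition sG (G : C -> Prop) (x y : C) : R :=
  Cmod (x - y) /
  real (Glb_Rbar (fun r => exists z, boundary G z /\ r = Cmod (x - z) + Cmod (z - y))).

Definition jstar (G : C -> Prop) (x y : C) : R :=
  Cmod (x - y) / (Cmod (x - y) + 2 * Rmin (dG G x) (dG G y)).

From Stdlib Require Import Reals Lra Psatz.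
From Coquelicot Require Import Coquelicot.
Open Scope R_scope.

(** For theta > pi the complement K of S_theta is a closed convex cone, so K + K = K.
    Translating x, y by a boundary point z (which lies in K) therefore keeps them in
    S_theta and does not bring them closer to K, and it suffices to show
    |x - y| + 2m <= 2 sin(theta/4) (|x| + |y|) whenever m is at most the distance from
    x = r e^(i t1) and y = p e^(i t2) to K.  Such an m is at most r sin(min(t1, pi/2))
    and p sin(min(theta - t2, pi/2)); with tau = 4rp/(r+p)^2 and h = (t2 - t1)/2 the
    inequality becomes sqrt(1 - tau cos^2 h) + tau sin(min(theta/2 - h, pi/2))
    <= 2 sin(theta/4), a quadratic inequality in tau on [0,1].  Equality holds for
    x = e^(i theta/4), y = e^(i 3theta/4) and z = 0, which gives sharpness. *)

Definition polar (r t : R) : C := (r * cos t, r * sin t).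

Lemma Cmod_polar (r t : R) : 0 <= r -> Cmod (polar r t) = r.
Proof.
  intros Hr. unfold Cmod, polar; cbn [fst snd].
  replace ((r * cos t) ^ 2 + (r * sin t) ^ 2) with (r ^ 2).
  - apply sqrt_pow2; exact Hr.
  - rewrite <- (Rmult_1_r (r ^ 2)), <- (sin2_cos2 t). unfold Rsqr. ring.
Qed.

Lemma Cmod_polar_sub_sq (r p a b : R) :
  Cmod (polar r a - polar p b) ^ 2 = (r + p) ^ 2 - 4 * r * p * cos ((b - a) / 2) ^ 2.
Proof.
  assert (Hcos : cos (b - a) = 2 * cos ((b - a) / 2) ^ 2 - 1).
  { replace (b - a) with (2 * ((b - a) / 2)) at 1 by field. rewrite cos_2a_cos. ring. }
  rewrite cos_minus in Hcos.
  pose proof (f_equal (Rmult (r * r)) (sin2_cos2 a)) as Ha.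
  pose proof (f_equal (Rmult (p * p)) (sin2_cos2 b)) as Hb.
  pose proof (f_equal (Rmult (r * p)) Hcos) as Hab.
  rewrite Cmod2_alt. unfold polar, Re, Im, Rsqr in *; simpl. lra.
Qed.

Lemma Cmod_imag (b : R) : Cmod (0, b) = Rabs b.
Proof.
  unfold Cmod. cbn [fst snd]. rewrite <- sqrt_Rsqr_abs, Rsqr_pow2. f_equal. ring.
Qed.

Lemma Cmod_sub_comm (p q : C) : Cmod (p - q) = Cmod (q - p).
Proof. rewrite <- Cmod_opp. f_equal. ring. Qed.

Lemma Cmod_sub_triangle (x y z : C) : Cmod (x - y) <= Cmod (x - z) + Cmod (z - y).
Proof. replace (x - y)%C with ((x - z) + (z - y))%C by ring. apply Cmod_triangle. Qed.

Lemma Im_sub_le_Cmod (p q : C) : snd p - snd q <= Cmod (p - q).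
Proof.
  eapply Rle_trans; [apply Rle_abs|]. eapply Rle_trans; [|apply Rmax_Cmod].
  apply Rmax_r.
Qed.

Lemma polar_of_Im_pos (x : C) :
  0 < snd x -> exists r t, 0 < r /\ 0 < t < PI /\ x = polar r t.
Proof.
  intros Hy. destruct x as [a b]; simpl in Hy.
  set (r := Cmod (a, b)).
  assert (Hr : 0 < r) by (apply Cmod_gt_0; intros [=]; lra).
  assert (Hr2 : r ^ 2 = a ^ 2 + b ^ 2) by (unfold r; rewrite Cmod2_alt; reflexivity).
  set (c := a / r).
  assert (Hc : -1 <= c <= 1).
  { unfold c. split; [apply Rle_div_r|apply Rle_div_l]; nra. }
  assert (Hsin : sin (acos c) = b / r).
  { rewrite sin_acos by exact Hc.
    replace (1 - c²) with ((b / r) ^ 2).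
    2: { unfold c, Rsqr. transitivity ((r ^ 2 - a ^ 2) / r ^ 2).
         - replace (r ^ 2 - a ^ 2) with (b ^ 2) by lra. field. lra.
         - field. lra. }
    apply sqrt_pow2. apply Rlt_le, Rdiv_lt_0_compat; assumption. }
  assert (Hb : 0 < sin (acos c)) by (rewrite Hsin; apply Rdiv_lt_0_compat; assumption).
  exists r, (acos c). split; [exact Hr|]. split.
  - destruct (acos_bound c) as [H0 HPI]. split.
    + destruct H0 as [H0|H0]; [exact H0|]. rewrite <- H0, sin_0 in Hb. lra.
    + destruct HPI as [HPI|HPI]; [exact HPI|]. rewrite HPI, sin_PI in Hb. lra.
  - unfold polar. rewrite cos_acos by exact Hc. rewrite Hsin. unfold c. f_equal; field; lra.
Qed.

(* For 0 <= t <= pi, [r * sin_clamp t] is the distance from [polar r t] to the ray [0, +oo). *)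
Definition sin_clamp (u : R) : R := sin (Rmin u (PI / 2)).

Lemma sin_clamp_bounds (u : R) : 0 <= u -> 0 <= sin_clamp u <= 1.
Proof.
  intros Hu. pose proof PI_RGT_0. unfold sin_clamp. split; [|apply SIN_bound].
  apply sin_ge_0; unfold Rmin; destruct (Rle_dec u (PI / 2)); lra.
Qed.

Lemma sin_clamp_midpoint (u w : R) : 0 <= u -> 0 <= w ->
  sin_clamp u + sin_clamp w <= 2 * sin_clamp ((u + w) / 2).
Proof.
  intros Hu Hw. pose proof PI_RGT_0. unfold sin_clamp.
  set (u' := Rmin u (PI / 2)). set (w' := Rmin w (PI / 2)). set (m := Rmin ((u + w) / 2) (PI / 2)).
  assert (Hu' : 0 <= u' <= PI / 2) by (unfold u', Rmin; destruct (Rle_dec u (PI / 2)); lra).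
  assert (Hw' : 0 <= w' <= PI / 2) by (unfold w', Rmin; destruct (Rle_dec w (PI / 2)); lra).
  assert (Hm : (u' + w') / 2 <= m <= PI / 2)
    by (unfold m, u', w', Rmin; repeat destruct (Rle_dec _ _); lra).
  set (p := (u' + w') / 2). set (q := (u' - w') / 2).
  assert (Hsum : sin u' + sin w' = 2 * sin p * cos q).
  { replace u' with (p + q) by (unfold p, q; field).
    replace w' with (p - q) by (unfold p, q; field).
    rewrite sin_plus, sin_minus. ring. }
  assert (Hmid : 0 <= sin p <= sin m)
    by (unfold p; split; [apply sin_ge_0|apply sin_incr_1]; lra).
  pose proof (COS_bound q). rewrite Hsum. nra.
Qed.

Lemma quadratic_nonneg_unit_interval (a b c t : R) :
  0 <= a <= 1 -> 1 <= c -> 0 <= a + b + c -> 0 <= t <= 1 -> 0 <= a * t ^ 2 + b * t + c.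
Proof.
  intros Ha Hc Habc Ht. destruct (Rle_lt_dec 0 b) as [Hb|Hb]; [nra|].
  destruct (Rle_lt_dec (b + 2 * a) 0) as [Hb2|Hb2].
  - assert (Hmono : 0 <= (1 - t) * (- (a * (t + 1) + b))) by (apply Rmult_le_pos; nra).
    nra.
  - assert (Hvertex : 4 * a * (a * t ^ 2 + b * t + c) = (2 * a * t + b) ^ 2 + (4 * a * c - b ^ 2))
      by ring.
    assert (Hdisc : b ^ 2 <= 4 * a * c) by nra.
    assert (Hsq : 0 <= (2 * a * t + b) ^ 2) by apply pow2_ge_0.
    apply (Rmult_le_reg_l (4 * a)); lra.
Qed.

Lemma affine_exit (a b : R) : b <= 0 ->
  exists l, 0 <= l <= 1 /\ (forall l', l <= l' <= 1 -> a + l' * (b - a) <= 0) /\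
    (0 < a -> 0 < l /\ a + l * (b - a) = 0) /\ (a <= 0 -> l = 0).
Proof.
  intros Hb. destruct (Rlt_le_dec 0 a) as [Ha|Ha].
  - exists (a / (a - b)).
    assert (Hl : a / (a - b) * (a - b) = a) by (field; lra).
    split; [split|split; [|split; [split|]]].
    + apply Rlt_le, Rdiv_lt_0_compat; lra.
    + apply Rle_div_l; lra.
    + intros l' [Hl' _]. apply Rmult_le_compat_r with (r := a - b) in Hl'; lra.
    + apply Rdiv_lt_0_compat; lra.
    + field. lra.
    + lra.
  - exists 0. repeat split; try lra. intros l' Hl'. nra.
Qed.

Lemma Glb_Rbar_real_bounds (E : R -> Prop) (e0 L : R) :
  E e0 -> (forall e, E e -> L <= e) ->
  L <= real (Glb_Rbar E) /\ (forall e, E e -> real (Glb_Rbar E) <= e).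
Proof.
  intros He0 HL. destruct (Glb_Rbar_correct E) as [Hlb Hglb].
  assert (Hlow : Rbar_le L (Glb_Rbar E)) by (apply Hglb; intros e He; apply HL, He).
  assert (Hup : Rbar_le (Glb_Rbar E) e0) by (apply Hlb, He0).
  destruct (Glb_Rbar E) as [g| |]; simpl in *; try contradiction.
  split; [exact Hlow|]. intros e He. exact (Hlb e He).
Qed.

Section Infima.
Variables (G : C -> Prop) (x y : C).

Lemma dG_le (z : C) : boundary G z -> dG G x <= Cmod (x - z).
Proof.
  intros Hz. unfold dG.
  destruct (Glb_Rbar_real_bounds
    (fun r => exists z, boundary G z /\ r = Cmod (x - z)) (Cmod (x - z)) 0) as [_ Hinf].
  - exists z. split; [exact Hz|reflexivity].
  - intros e [w [_ ->]]. apply Cmod_ge_0.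
  - apply Hinf. exists z. split; [exact Hz|reflexivity].
Qed.

Lemma dG_ge (z0 : C) (L : R) : boundary G z0 ->
  (forall z, boundary G z -> L <= Cmod (x - z)) -> L <= dG G x.
Proof.
  intros Hz0 HL. unfold dG.
  apply (Glb_Rbar_real_bounds _ (Cmod (x - z0)) L).
  - exists z0. split; [exact Hz0|reflexivity].
  - intros e [z [Hz ->]]. apply HL, Hz.
Qed.

Lemma sG_le_div (z0 : C) (L : R) : boundary G z0 -> 0 < L ->
  (forall z, boundary G z -> L <= Cmod (x - z) + Cmod (z - y)) ->
  sG G x y <= Cmod (x - y) / L.
Proof.
  intros Hz0 HL Hbound. unfold sG.
  destruct (Glb_Rbar_real_bounds
    (fun r => exists z, boundary G z /\ r = Cmod (x - z) + Cmod (z - y))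
    (Cmod (x - z0) + Cmod (z0 - y)) L) as [HI _].
  - exists z0. split; [exact Hz0|reflexivity].
  - intros e [z [Hz ->]]. apply Hbound, Hz.
  - apply Rmult_le_compat_l; [apply Cmod_ge_0|].
    apply Rinv_le_contravar; assumption.
Qed.

Lemma sG_ge_div (z : C) : boundary G z ->
  Cmod (x - y) / (Cmod (x - z) + Cmod (z - y)) <= sG G x y.
Proof.
  intros Hz. unfold sG.
  destruct (Glb_Rbar_real_bounds
    (fun r => exists z, boundary G z /\ r = Cmod (x - z) + Cmod (z - y))
    (Cmod (x - z) + Cmod (z - y)) (Cmod (x - y))) as [HI Hinf].
  - exists z. split; [exact Hz|reflexivity].
  - intros e [w [_ ->]]. apply Cmod_sub_triangle.
  - assert (Hz' : real (Glb_Rbar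
      (fun r => exists z, boundary G z /\ r = Cmod (x - z) + Cmod (z - y)))
      <= Cmod (x - z) + Cmod (z - y)) by (apply Hinf; exists z; split; [exact Hz|reflexivity]).
    destruct (Cmod_ge_0 (x - y)) as [Hd|Hd].
    + apply Rmult_le_compat_l; [lra|]. apply Rinv_le_contravar; lra.
    + rewrite <- Hd. unfold Rdiv. rewrite !Rmult_0_l. lra.
Qed.

End Infima.

Section Sector.
Variable th : R.
Hypothesis Hth : PI < th < 2 * PI.

(* [reflect] is z |-> e^(i th) conj z, the reflection in the bisector of the sector; it swaps
   the two edge rays, so the closed complement [cosector] of the sector (for th > pi) is
   cut out by [Im z <= 0] and [Im (reflect z) <= 0]. *)
Definition reflect (p : C) : C := ((cos th, sin th) * Cconj p)%C.

Definition cosector (p : C) : Prop := snd p <= 0 /\ snd (reflect p) <= 0.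

Lemma reflect_coords (p : C) :
  reflect p = (cos th * fst p + sin th * snd p, sin th * fst p - cos th * snd p).
Proof. unfold reflect, Cconj, Cmult; simpl. f_equal; ring. Qed.

Lemma Im_reflect (p : C) : snd (reflect p) = sin th * fst p - cos th * snd p.
Proof. rewrite reflect_coords. reflexivity. Qed.

Lemma reflect_involutive (p : C) : reflect (reflect p) = p.
Proof.
  destruct p as [a b]. pose proof (sin2_cos2 th) as E. unfold Rsqr in E.
  rewrite !reflect_coords; simpl. f_equal.
  - transitivity (a * (sin th * sin th + cos th * cos th)); [ring|rewrite E; ring].
  - transitivity (b * (sin th * sin th + cos th * cos th)); [ring|rewrite E; ring].
Qed.

Lemma reflect_add (p q : C) : reflect (p + q) = (reflect p + reflect q)%C.
Proof. unfold reflect. rewrite Cplus_conj. ring. Qed.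

Lemma reflect_sub (p q : C) : reflect (p - q) = (reflect p - reflect q)%C.
Proof. unfold reflect. rewrite Cminus_conj. ring. Qed.

Lemma Cmod_reflect (p : C) : Cmod (reflect p) = Cmod p.
Proof.
  unfold reflect. rewrite Cmod_mult, Cmod_conj.
  replace (Cmod (cos th, sin th)) with 1; [ring|].
  symmetry. rewrite <- (Cmod_polar 1 th) by lra. unfold polar. f_equal; f_equal; ring.
Qed.

Lemma reflect_polar (r t : R) : reflect (polar r t) = polar r (th - t).
Proof.
  rewrite reflect_coords. unfold polar; simpl. rewrite cos_minus, sin_minus. f_equal; ring.
Qed.

Lemma cosector_reflect (w : C) : cosector w -> cosector (reflect w).
Proof. intros [H1 H2]. split; [exact H2|]. rewrite reflect_involutive. exact H1. Qed.

Lemma cosector_add (z w : C) : cosector z -> cosector w -> cosector (z + w).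
Proof. unfold cosector. rewrite reflect_add. destruct z, w; simpl. lra. Qed.

Lemma sector_iff_not_cosector (x : C) : sector th x <-> ~ cosector x.
Proof.
  split.
  - intros [r [t [Hr [Ht Hx]]]] [H1 H2]. change (x = polar r t) in Hx. subst x.
    destruct (Rlt_le_dec t PI) as [Hlt|Hge].
    + simpl in H1. assert (0 < sin t) by (apply sin_gt_0; lra). nra.
    + rewrite reflect_polar in H2. simpl in H2.
      assert (0 < sin (th - t)) by (apply sin_gt_0; lra). nra.
  - intros Hx. destruct (Rlt_le_dec 0 (snd x)) as [H1|H1].
    + destruct (polar_of_Im_pos x H1) as [r [t [Hr [Ht ->]]]].
      exists r, t. repeat split; lra.
    + destruct (Rlt_le_dec 0 (snd (reflect x))) as [H2|H2]; [|now exfalso; apply Hx].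
      destruct (polar_of_Im_pos _ H2) as [r [t [Hr [Ht Ht']]]].
      exists r, (th - t). repeat split; try lra.
      rewrite <- (reflect_involutive x), Ht', reflect_polar. reflexivity.
Qed.

Lemma not_sector_cosector (w : C) : ~ sector th w -> cosector w.
Proof.
  intros Hw. split; apply Rnot_lt_le; intros H; apply Hw, sector_iff_not_cosector;
    intros [H1 H2]; lra.
Qed.

Lemma boundary_cosector (z : C) : boundary (sector th) z -> cosector z.
Proof.
  intros Hb. split; apply Rnot_lt_le; intros Hpos.
  - destruct (Hb _ Hpos) as [_ [w [Hw Hd]]]. apply not_sector_cosector in Hw as [Hw _].
    pose proof (Im_sub_le_Cmod z w). lra.
  - destruct (Hb _ Hpos) as [_ [w [Hw Hd]]]. apply not_sector_cosector in Hw as [_ Hw].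
    pose proof (Im_sub_le_Cmod (reflect z) (reflect w)) as H.
    rewrite <- reflect_sub, Cmod_reflect in H. lra.
Qed.

Lemma cosector_edge_boundary (z : C) :
  cosector z -> snd z = 0 \/ snd (reflect z) = 0 -> boundary (sector th) z.
Proof.
  intros Hz Hedge e He. split.
  - set (v := (0, e / 2) : C).
    assert (Hv : Cmod v = e / 2).
    { unfold v. rewrite Cmod_imag. apply Rabs_pos_eq. lra. }
    assert (Hstep : exists u, Cmod u = e / 2 /\ ~ cosector (z + u)).
    { destruct Hedge as [H|H].
      - exists v. split; [exact Hv|]. intros [H1 _]. simpl in H1. lra.
      - exists (reflect v). split; [rewrite Cmod_reflect; exact Hv|]. intros [_ H2].
        rewrite reflect_add, reflect_involutive in H2. unfold v in H2.
        cbn [Cplus fst snd] in H2. lra. }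
    destruct Hstep as [u [Hu Hout]]. exists (z + u)%C.
    split; [apply sector_iff_not_cosector, Hout|].
    replace (z - (z + u))%C with (- u)%C by ring. rewrite Cmod_opp. lra.
  - exists z. split; [rewrite sector_iff_not_cosector; tauto|].
    replace (z - z)%C with (RtoC 0) by ring. rewrite Cmod_0. exact He.
Qed.

Lemma cosector_0 : cosector 0.
Proof. unfold cosector. rewrite Im_reflect. simpl. lra. Qed.

Lemma origin_boundary : boundary (sector th) 0.
Proof. apply cosector_edge_boundary; [exact cosector_0|left; reflexivity]. Qed.

(* The witness is the first point of the segment from x to w that lies in the cosector. *)
Lemma cosector_edge_nearer (x w : C) : ~ cosector x -> cosector w ->
  exists q, cosector q /\ (snd q = 0 \/ snd (reflect q) = 0) /\ Cmod (x - q) <= Cmod (x - w).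
Proof.
  intros Hx [Hw1 Hw2].
  assert (Hnear : forall l, 0 <= l <= 1 -> Cmod (x - (x + l * (w - x))) <= Cmod (x - w)).
  { intros l Hl. replace (x - (x + l * (w - x)))%C with (RtoC l * (x - w))%C by ring.
    rewrite Cmod_mult, Cmod_R, Rabs_pos_eq by lra.
    pose proof (Cmod_ge_0 (x - w)). nra. }
  assert (Hq1 : forall l : R, snd (x + l * (w - x))%C = snd x + l * (snd w - snd x))
    by (intros; simpl; ring).
  assert (Hq2 : forall l : R, snd (reflect (x + l * (w - x)))
                          = snd (reflect x) + l * (snd (reflect w) - snd (reflect x)))
    by (intros; rewrite !Im_reflect; simpl; ring).
  destruct (affine_exit (snd x) _ Hw1) as [l1 [Hl1 [Hout1 [Hpos1 Hzero1]]]].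
  destruct (affine_exit (snd (reflect x)) _ Hw2) as [l2 [Hl2 [Hout2 [Hpos2 Hzero2]]]].
  assert (Hin : 0 < snd x \/ 0 < snd (reflect x)).
  { destruct (Rlt_le_dec 0 (snd x)); [now left|].
    destruct (Rlt_le_dec 0 (snd (reflect x))); [now right|].
    exfalso. apply Hx. split; assumption. }
  destruct (Rle_lt_dec l1 l2).
  - exists (x + l2 * (w - x))%C. unfold cosector. rewrite Hq1, Hq2.
    split; [split; [apply Hout1|apply Hout2]; lra|]. split; [|apply Hnear, Hl2].
    right. destruct (Rlt_le_dec 0 (snd (reflect x))) as [H|H]; [apply Hpos2, H|].
    exfalso. specialize (Hzero2 H). destruct Hin as [H'|H']; [|lra].
    destruct (Hpos1 H'). lra.
  - exists (x + l1 * (w - x))%C. unfold cosector. rewrite Hq1, Hq2.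
    split; [split; [apply Hout1|apply Hout2]; lra|]. split; [|apply Hnear, Hl1].
    left. destruct (Rlt_le_dec 0 (snd x)) as [H|H]; [apply Hpos1, H|].
    exfalso. specialize (Hzero1 H). lra.
Qed.

Definition far_from_cosector (M : R) (p : C) : Prop := forall w, cosector w -> M <= Cmod (p - w).

Lemma far_from_cosector_Im (p : C) : far_from_cosector (snd p) p.
Proof.
  intros w [Hw _]. pose proof (Im_sub_le_Cmod p w). lra.
Qed.

Lemma far_from_cosector_reflect (M : R) (p : C) :
  far_from_cosector M p -> far_from_cosector M (reflect p).
Proof.
  intros Hfar w Hw. rewrite <- (reflect_involutive w), <- reflect_sub, Cmod_reflect.
  apply Hfar, cosector_reflect, Hw.
Qed.

Lemma far_from_cosector_sub (M : R) (x z : C) :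
  cosector z -> far_from_cosector M x -> far_from_cosector M (x - z).
Proof.
  intros Hz Hfar w Hw. replace (x - z - w)%C with (x - (z + w))%C by ring.
  apply Hfar, cosector_add; assumption.
Qed.

Lemma far_from_cosector_polar (M r t : R) : 0 <= r -> 0 <= t ->
  far_from_cosector M (polar r t) -> M <= r * sin_clamp t.
Proof.
  intros Hr Ht Hfar. pose proof PI_RGT_0.
  unfold sin_clamp. destruct (Rle_dec t (PI / 2)) as [Hle|Hgt].
  - rewrite Rmin_left by exact Hle.
    assert (Hsth : sin th < 0) by (apply sin_lt_0; lra).
    assert (Hc : 0 <= cos t) by (apply cos_ge_0; lra).
    assert (Hs : 0 <= sin t) by (apply sin_ge_0; lra).
    set (foot := (r * cos t, 0) : C).
    assert (Hfoot : cosector foot).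
    { assert (0 <= r * cos t) by nra.
      unfold cosector, foot. rewrite Im_reflect. simpl. split; [lra|]. nra. }
    specialize (Hfar _ Hfoot).
    replace (polar r t - foot)%C with ((0, r * sin t) : C) in Hfar
      by (unfold polar, foot, Cminus, Cplus, Copp; simpl; f_equal; ring).
    rewrite Cmod_imag, Rabs_pos_eq in Hfar by nra. exact Hfar.
  - rewrite Rmin_right, sin_PI2, Rmult_1_r by lra.
    rewrite <- (Cmod_polar r t Hr). replace (polar r t) with (polar r t - 0)%C by ring.
    apply Hfar, cosector_0.
Qed.

Lemma far_from_cosector_dG (x : C) :
  sector th x -> far_from_cosector (dG (sector th) x) x.
Proof.
  intros Hx w Hw. apply sector_iff_not_cosector in Hx.
  destruct (cosector_edge_nearer x w Hx Hw) as [q [Hq [Hedge Hnear]]].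
  eapply Rle_trans; [apply dG_le, cosector_edge_boundary|]; eassumption.
Qed.

Lemma far_from_cosector_le_dG (M : R) (x : C) :
  far_from_cosector M x -> M <= dG (sector th) x.
Proof.
  intros Hfar. apply (dG_ge _ _ 0 _ origin_boundary).
  intros z Hz. apply Hfar, boundary_cosector, Hz.
Qed.

Lemma sector_polar (r t : R) : 0 < r -> 0 < t < th -> sector th (polar r t).
Proof. intros Hr Ht. exists r, t. repeat split; lra. Qed.

Lemma sector_sub_cosector (x z : C) : sector th x -> cosector z -> sector th (x - z).
Proof.
  rewrite !sector_iff_not_cosector. intros Hx Hz Hxz. apply Hx.
  replace x with (z + (x - z))%C by ring. apply cosector_add; assumption.
Qed.

Lemma sin_quarter_bounds : 0 < sin (th / 4) <= 1 /\ 1 < 2 * sin (th / 4) ^ 2.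
Proof.
  pose proof PI_RGT_0.
  assert (Hc : cos (2 * (th / 4)) < 0) by (apply cos_lt_0; lra).
  rewrite cos_2a_sin in Hc.
  split; [split; [apply sin_gt_0; lra|apply SIN_bound]|lra].
Qed.

Lemma sin_add_sin_clamp_le (h : R) : 0 <= h < th / 2 ->
  sin h + sin_clamp (th / 2 - h) <= 2 * sin (th / 4).
Proof.
  intros Hh. pose proof PI_RGT_0. destruct sin_quarter_bounds as [HS HS2].
  unfold sin_clamp. destruct (Rle_lt_dec (th / 2 - h) (PI / 2)) as [Hle|Hgt].
  - rewrite Rmin_left by exact Hle.
    replace h with (th / 4 + (h - th / 4)) at 1 by ring.
    replace (th / 2 - h) with (th / 4 - (h - th / 4)) by field.
    rewrite (sin_plus (th / 4)), (sin_minus (th / 4)).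
    pose proof (COS_bound (h - th / 4)). nra.
  - rewrite Rmin_right, sin_PI2 by lra.
    assert (Hsin : sin h <= sin (th / 2 - PI / 2)) by (apply sin_incr_1; lra).
    rewrite sin_minus, sin_PI2, cos_PI2 in Hsin.
    replace (th / 2) with (2 * (th / 4)) in Hsin by field. rewrite cos_2a_sin in Hsin.
    nra.
Qed.

(* The difference of the two sides is a quadratic in t whose value at t = 1 is
   (2 sin(th/4) - sin_clamp(th/2 - h))^2 - sin^2 h >= 0. *)
Lemma sector_quadratic_bound (h t : R) : 0 <= h < th / 2 -> 0 <= t <= 1 ->
  1 - t * cos h ^ 2 <= (2 * sin (th / 4) - t * sin_clamp (th / 2 - h)) ^ 2.
Proof.
  intros Hh Ht. pose proof PI_RGT_0. destruct sin_quarter_bounds as [[HS0 HS1] HS2].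
  pose proof (sin_add_sin_clamp_le h Hh) as Hsum.
  destruct (sin_clamp_bounds (th / 2 - h)) as [HF0 HF1]; [lra|].
  set (S := sin (th / 4)) in *. set (F := sin_clamp (th / 2 - h)) in *.
  assert (Hsh : 0 <= sin h) by (apply sin_ge_0; lra).
  assert (Habc : 0 <= F ^ 2 + (cos h ^ 2 - 4 * S * F) + (4 * S ^ 2 - 1)).
  { pose proof (sin2_cos2 h) as E. unfold Rsqr in E.
    replace (F ^ 2 + (cos h ^ 2 - 4 * S * F) + (4 * S ^ 2 - 1))
      with ((2 * S - F - sin h) * (2 * S - F + sin h)) by (rewrite <- E; ring).
    apply Rmult_le_pos; lra. }
  pose proof (quadratic_nonneg_unit_interval (F ^ 2) (cos h ^ 2 - 4 * S * F) (4 * S ^ 2 - 1) t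
    ltac:(nra) ltac:(lra) Habc Ht).
  nra.
Qed.

(* With s = r + p, t = 4rp/s^2, h = (t2 - t1)/2 and F = sin_clamp(th/2 - h):
   |x - y| = s sqrt(1 - t cos^2 h), and 2M <= s t F by concavity of sin_clamp. *)
Lemma polar_sector_ineq (r p t1 t2 M : R) : 0 < r -> 0 < p -> 0 < t1 <= t2 -> t2 < th ->
  M <= r * sin_clamp t1 -> M <= p * sin_clamp (th - t2) ->
  Cmod (polar r t1 - polar p t2) + 2 * M <= 2 * sin (th / 4) * (r + p).
Proof.
  intros Hr Hp Ht Ht2 HMx HMy. destruct sin_quarter_bounds as [[HS0 HS1] HS2].
  set (s := r + p). set (h := (t2 - t1) / 2). set (t := 4 * (r * p) / s ^ 2).
  set (F := sin_clamp (th / 2 - h)). set (S := sin (th / 4)) in *.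
  assert (Hs : 0 < s) by (unfold s; lra).
  assert (Ht01 : 0 <= t <= 1).
  { unfold t. split.
    - apply Rmult_le_pos; [nra|]. apply Rlt_le, Rinv_0_lt_compat. nra.
    - apply Rle_div_l; [nra|]. pose proof (pow2_ge_0 (r - p)). unfold s. nra. }
  assert (HF : 0 <= F <= 1) by (apply sin_clamp_bounds; unfold h; lra).
  assert (HMs : M * s <= 2 * (r * p) * F).
  { pose proof (sin_clamp_midpoint t1 (th - t2) ltac:(lra) ltac:(lra)) as Hmid.
    replace ((t1 + (th - t2)) / 2) with (th / 2 - h) in Hmid by (unfold h; field).
    fold F in Hmid.
    apply Rmult_le_compat_l with (r := p) in HMx; [|lra].
    apply Rmult_le_compat_l with (r := r) in HMy; [|lra].
    assert (r * p * (sin_clamp t1 + sin_clamp (th - t2)) <= r * p * (2 * F))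
      by (apply Rmult_le_compat_l; nra).
    unfold s. nra. }
  assert (Hdist : Cmod (polar r t1 - polar p t2) <= s * (2 * S - t * F)).
  { pose proof (Cmod_ge_0 (polar r t1 - polar p t2)).
    assert (HtF1 : t * F <= 1) by nra.
    assert (H2S : 1 < 2 * S) by nra.
    apply Rsqr_incr_0_var; [|apply Rmult_le_pos; lra].
    rewrite !Rsqr_pow2, Cmod_polar_sub_sq. fold s h.
    replace (s ^ 2 - 4 * r * p * cos h ^ 2) with (s ^ 2 * (1 - t * cos h ^ 2))
      by (unfold t; field; lra).
    rewrite Rpow_mult_distr. apply Rmult_le_compat_l; [nra|].
    apply sector_quadratic_bound; [unfold h; lra|exact Ht01]. }
  assert (HtF : s * (t * F) = 4 * (r * p) * F / s) by (unfold t; field; lra).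
  assert (H2M : 2 * M <= s * (t * F)).
  { rewrite HtF. apply (Rmult_le_reg_r s); [exact Hs|].
    replace (4 * (r * p) * F / s * s) with (4 * (r * p) * F) by (field; lra). lra. }
  fold s. nra.
Qed.

Lemma far_sector_ineq_origin (M : R) (x y : C) : sector th x -> sector th y ->
  far_from_cosector M x -> far_from_cosector M y ->
  Cmod (x - y) + 2 * M <= 2 * sin (th / 4) * (Cmod x + Cmod y).
Proof.
  intros [r [t1 [Hr [Ht1 Hx]]]] [p [t2 [Hp [Ht2 Hy]]]].
  change (x = polar r t1) in Hx. change (y = polar p t2) in Hy. subst x y.
  rewrite !Cmod_polar by lra.
  assert (Hedges : forall r t, 0 < r -> 0 < t < th -> far_from_cosector M (polar r t) ->
            M <= r * sin_clamp t /\ M <= r * sin_clamp (th - t)).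
  { intros r' t' Hr' Ht' Hfar. split; apply far_from_cosector_polar; try lra; [exact Hfar|].
    rewrite <- reflect_polar. apply far_from_cosector_reflect, Hfar. }
  intros Hfx Hfy.
  destruct (Hedges r t1 Hr Ht1 Hfx) as [Hx1 Hx2].
  destruct (Hedges p t2 Hp Ht2 Hfy) as [Hy1 Hy2].
  destruct (Rle_lt_dec t1 t2).
  - apply polar_sector_ineq; lra.
  - rewrite Cmod_sub_comm, (Rplus_comm r p). apply polar_sector_ineq; lra.
Qed.

(* Translating by z only moves points away from the cosector, since it is a convex cone. *)
Lemma far_sector_ineq (M : R) (x y z : C) : sector th x -> sector th y -> cosector z ->
  far_from_cosector M x -> far_from_cosector M y ->
  Cmod (x - y) + 2 * M <= 2 * sin (th / 4) * (Cmod (x - z) + Cmod (z - y)).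
Proof.
  intros Hx Hy Hz Hfx Hfy.
  replace (x - y)%C with ((x - z) - (y - z))%C by ring. rewrite (Cmod_sub_comm z y).
  apply far_sector_ineq_origin;
    auto using sector_sub_cosector, far_from_cosector_sub.
Qed.

Lemma sG_sector_le (x y : C) : sector th x -> sector th y ->
  sG (sector th) x y <= 2 * sin (th / 4) * jstar (sector th) x y.
Proof.
  intros Hx Hy. destruct sin_quarter_bounds as [[HS _] _].
  set (m := Rmin (dG (sector th) x) (dG (sector th) y)).
  set (d := Cmod (x - y)).
  assert (Hd : 0 <= d) by apply Cmod_ge_0.
  assert (Hm : 0 <= m).
  { apply Rmin_glb; apply far_from_cosector_le_dG; intros w _; apply Cmod_ge_0. }
  assert (Hfx : far_from_cosector m x).
  { intros w Hw. eapply Rle_trans; [apply Rmin_l|apply far_from_cosector_dG; assumption]. }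
  assert (Hfy : far_from_cosector m y).
  { intros w Hw. eapply Rle_trans; [apply Rmin_r|apply far_from_cosector_dG; assumption]. }
  unfold jstar. fold d m.
  destruct (Req_dec (d + 2 * m) 0) as [H0|H0].
  - assert (Hd0 : d = 0) by lra.
    unfold sG. fold d. rewrite Hd0. unfold Rdiv. rewrite !Rmult_0_l, Rmult_0_r. lra.
  - apply Rle_trans with (d / ((d + 2 * m) / (2 * sin (th / 4)))).
    + apply (sG_le_div _ _ _ 0); [exact origin_boundary|apply Rdiv_lt_0_compat; lra|].
      intros z Hz. apply Rle_div_l; [lra|].
      pose proof (far_sector_ineq m x y z Hx Hy (boundary_cosector z Hz) Hfx Hfy) as Hineq.
      fold d in Hineq. lra.
    + right. field. lra.
Qed.

Lemma Cmod_quarter_points :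
  Cmod (polar 1 (th / 4) - polar 1 (3 * th / 4)) = 2 * sin (th / 4).
Proof.
  destruct sin_quarter_bounds as [[HS _] _].
  pose proof (Cmod_polar_sub_sq 1 1 (th / 4) (3 * th / 4)) as Hsq.
  replace ((3 * th / 4 - th / 4) / 2) with (th / 4) in Hsq by field.
  pose proof (sin2_cos2 (th / 4)) as E. unfold Rsqr in E.
  rewrite <- (Rabs_pos_eq (Cmod _)) by apply Cmod_ge_0.
  rewrite <- (Rabs_pos_eq (2 * sin (th / 4))) by lra.
  apply Rsqr_eq_abs_0. rewrite !Rsqr_pow2, Hsq. nra.
Qed.

Lemma sG_quarter_points :
  sin (th / 4) <= sG (sector th) (polar 1 (th / 4)) (polar 1 (3 * th / 4)).
Proof.
  eapply Rle_trans; [|apply (sG_ge_div _ _ _ 0 origin_boundary)].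
  rewrite Cmod_quarter_points, Cmod_sub_comm.
  replace (0 - polar 1 (3 * th / 4))%C with (- polar 1 (3 * th / 4))%C by ring.
  replace (0 - polar 1 (th / 4))%C with (- polar 1 (th / 4))%C by ring.
  rewrite !Cmod_opp, !Cmod_polar by lra. right. field.
Qed.

Lemma jstar_quarter_points :
  0 <= jstar (sector th) (polar 1 (th / 4)) (polar 1 (3 * th / 4)) <= 1 / 2.
Proof.
  destruct sin_quarter_bounds as [[HS _] _].
  assert (Hfar : far_from_cosector (sin (th / 4)) (polar 1 (th / 4))).
  { replace (sin (th / 4)) with (snd (polar 1 (th / 4))) at 1 by (simpl; ring).
    apply far_from_cosector_Im. }
  assert (Hx : sin (th / 4) <= dG (sector th) (polar 1 (th / 4)))
    by (apply far_from_cosector_le_dG, Hfar).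
  assert (Hy : sin (th / 4) <= dG (sector th) (polar 1 (3 * th / 4))).
  { apply far_from_cosector_le_dG.
    rewrite <- (reflect_involutive (polar 1 (3 * th / 4))), reflect_polar.
    replace (th - 3 * th / 4) with (th / 4) by field.
    apply far_from_cosector_reflect, Hfar. }
  unfold jstar. rewrite Cmod_quarter_points.
  set (m := Rmin _ _).
  assert (Hm : sin (th / 4) <= m) by (apply Rmin_glb; assumption).
  split.
  - apply Rdiv_le_0_compat; lra.
  - apply Rle_div_l; lra.
Qed.

End Sector.

Theorem theorem3p4 (theta : R) (Htheta : PI < theta < 2 * PI) :
  (forall x y : C, sector theta x -> sector theta y ->
     sG (sector theta) x y <= 2 * sin (theta / 4) * jstar (sector theta) x y)
  /\
  (* sharpness: no smaller constant works *)
  (forall c : R,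
     (forall x y : C, sector theta x -> sector theta y ->
        sG (sector theta) x y <= c * jstar (sector theta) x y) ->
     2 * sin (theta / 4) <= c).
Proof.
  split.
  - exact (sG_sector_le theta Htheta).
  - intros c Hc. pose proof PI_RGT_0.
    assert (Hx : sector theta (polar 1 (theta / 4))) by (apply sector_polar; lra).
    assert (Hy : sector theta (polar 1 (3 * theta / 4))) by (apply sector_polar; lra).
    pose proof (Hc _ _ Hx Hy) as Hsharp.
    pose proof (sG_quarter_points theta Htheta) as Hs.
    pose proof (jstar_quarter_points theta Htheta) as Hj.
    destruct (sin_quarter_bounds theta Htheta) as [[HS _] _].
    destruct (Rle_lt_dec c 0); nra.
Qed.
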